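(* For every context $E$ and $\lambda\mu\mathrm{T}$-terms $r,s$ and $n\in\mathbb{N}$: (1) if $E[r]\in\mathrm{SN}_A$ and $s\in\mathrm{SN}_A$, then $E[\mathsf{nrec}\ r\ s\ 0]\in\mathrm{SN}_A$; (2) if $E[s\ \underline{n}\ (\mathsf{nrec}\ r\ s\ \underline{n})]\in\mathrm{SN}_A$, then $E[\mathsf{nrec}\ r\ s\ (\mathsf{S}\,\underline{n})]\in\mathrm{SN}_A$.
   Context: The calculus $\lambda\mu\mathrm{T}$ (raw terms). Types: $\rho,\sigma,\tau ::= \mathbb{N} \mid \sigma\to\tau$. Over infinite sets of $\lambda$-variables $x,y,\dots$ and $\mu$-variables $\alpha,\beta,\gamma,\dots$, terms and commands are mutually defined by $t,r,s ::= x \mid \lambda x{:}\rho.r \mid t\,s \mid \mu\alpha{:}\rho.c \mid 0 \mid \mathsf{S}\,t \mid \mathsf{nrec}_\rho\ r\ s\ t$ and $c ::= [\alpha]t$. Terms are considered modulo renaming of bound variables; $t[x:=r]$ is capture-avoiding substitution. Numerals: $\underline{n} := \mathsf{S}^n 0$. Contexts: $E ::= \Box \mid E\,t \mid \mathsf{S}\,E \mid \mathsf{nrec}\ r\ s\ E$; $E[u]$ fills the hole with $u$. Structural substitution $t[\alpha:=\beta E]$ is homomorphic on all constructs (capture-avoiding) except $([\alpha]u)[\alpha:=\beta E] := [\beta]E[u[\alpha:=\beta E]]$ (and $([\gamma]u)[\alpha:=\beta E]:=[\gamma](u[\alpha:=\beta E])$ for $\gamma\neq\alpha$). $\to_A$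 is the compatible closure (on terms and commands) of: $(\lambda x.t)r\to t[x:=r]$; $\mathsf{S}(\mu\alpha.c)\to\mu\alpha.c[\alpha:=\alpha(\mathsf{S}\,\Box)]$; $(\mu\alpha.c)s\to\mu\alpha.c[\alpha:=\alpha(\Box\,s)]$; $\mathsf{nrec}\ r\ s\ 0\to r$; $\mathsf{nrec}\ r\ s\ (\mathsf{S}\,\underline{n})\to s\ \underline{n}\ (\mathsf{nrec}\ r\ s\ \underline{n})$; $\mathsf{nrec}\ r\ s\ (\mu\alpha.c)\to\mu\alpha.c[\alpha:=\alpha(\mathsf{nrec}\ r\ s\ \Box)]$. $\mathrm{SN}_A$ is defined inductively: $t\in\mathrm{SN}_A$ whenever every $t'$ with $t\to_A t'$ is in $\mathrm{SN}_A$. *)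

(* Raw terms of lambda-mu-T in de Bruijn form
   (two separate index spaces: lambda-variables and mu-variables),
   so terms are identified up to renaming of bound variables. *)
From Stdlib Require Import Arith.

Inductive ty : Type :=
| TNat : ty
| TArr : ty -> ty -> ty.

Inductive term : Type :=
| Var  : nat -> term
| Lam  : ty -> term -> term
| App  : term -> term -> term
| Mu   : ty -> cmd -> term
| Zero : term
| Succ : term -> term
| Nrec : ty -> term -> term -> term -> term
with cmd : Type :=
| Named : nat -> term -> cmd.             (* [alpha] t, alpha a mu-index *)

Fixpoint num (n : nat) : term :=
  match n with 0 => Zero | S m => Succ (num m) end.

Inductive ctx : Type :=
| Hole  : ctx
| CApp  : ctx -> term -> ctx
| CSucc : ctx -> ctx
| CNrec : ty -> term -> term -> ctx -> ctx.

Fixpoint fill (E : ctx) (u : term) : term :=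
  match E with
  | Hole => u
  | CApp E t => App (fill E u) t
  | CSucc E => Succ (fill E u)
  | CNrec A r s E => Nrec A r s (fill E u)
  end.

Definition upren (xi : nat -> nat) (n : nat) : nat :=
  match n with 0 => 0 | S m => S (xi m) end.

Fixpoint ren (xi zeta : nat -> nat) (t : term) : term :=
  match t with
  | Var n => Var (xi n)
  | Lam A r => Lam A (ren (upren xi) zeta r)
  | App t s => App (ren xi zeta t) (ren xi zeta s)
  | Mu A c => Mu A (ren_c xi (upren zeta) c)
  | Zero => Zero
  | Succ t => Succ (ren xi zeta t)
  | Nrec A r s t => Nrec A (ren xi zeta r) (ren xi zeta s) (ren xi zeta t)
  end
with ren_c (xi zeta : nat -> nat) (c : cmd) : cmd :=
  match c with
  | Named a t => Named (zeta a) (ren xi zeta t)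
  end.

Fixpoint ren_ctx (xi zeta : nat -> nat) (E : ctx) : ctx :=
  match E with
  | Hole => Hole
  | CApp E t => CApp (ren_ctx xi zeta E) (ren xi zeta t)
  | CSucc E => CSucc (ren_ctx xi zeta E)
  | CNrec A r s E => CNrec A (ren xi zeta r) (ren xi zeta s) (ren_ctx xi zeta E)
  end.

Definition up_sub (sigma : nat -> term) (n : nat) : term :=
  match n with 0 => Var 0 | S m => ren S (fun a => a) (sigma m) end.

Definition up_sub_mu (sigma : nat -> term) (n : nat) : term :=
  ren (fun x => x) S (sigma n).

Fixpoint subst (sigma : nat -> term) (t : term) : term :=
  match t with
  | Var n => sigma n
  | Lam A r => Lam A (subst (up_sub sigma) r)
  | App t s => App (subst sigma t) (subst sigma s)
  | Mu A c => Mu A (subst_c (up_sub_mu sigma) c)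
  | Zero => Zero
  | Succ t => Succ (subst sigma t)
  | Nrec A r s t => Nrec A (subst sigma r) (subst sigma s) (subst sigma t)
  end
with subst_c (sigma : nat -> term) (c : cmd) : cmd :=
  match c with
  | Named a t => Named a (subst sigma t)
  end.

Definition subst1 (r : term) (t : term) : term :=
  subst (fun n => match n with 0 => r | S m => Var m end) t.

(* structural substitution t[alpha := alpha E] for the mu-variable with
   index k:  ([k]u)[k := k E] = [k] E[u[k := k E]], homomorphic elsewhere;
   E is shifted when passing under binders. *)
Fixpoint ssubst (k : nat) (E : ctx) (t : term) : term :=
  match t with
  | Var n => Var n
  | Lam A r => Lam A (ssubst k (ren_ctx S (fun a => a) E) r)
  | App t s => App (ssubst k E t) (ssubst k E s)
  | Mu A c => Mu A (ssubst_c (S k) (ren_ctx (fun x => x) S E) c)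
  | Zero => Zero
  | Succ t => Succ (ssubst k E t)
  | Nrec A r s t => Nrec A (ssubst k E r) (ssubst k E s) (ssubst k E t)
  end
with ssubst_c (k : nat) (E : ctx) (c : cmd) : cmd :=
  match c with
  | Named a u =>
      if Nat.eqb a k then Named a (fill E (ssubst k E u))
      else Named a (ssubst k E u)
  end.

Definition shmu (t : term) : term := ren (fun x => x) S t.
Definition shmu_ctx (E : ctx) : ctx := ren_ctx (fun x => x) S E.

Definition cod (A : ty) : ty :=
  match A with TArr _ B => B | TNat => TNat end.

Inductive step : term -> term -> Prop :=
| st_beta A t r : step (App (Lam A t) r) (subst1 r t)
| st_succ_mu A c :
    step (Succ (Mu A c)) (Mu A (ssubst_c 0 (CSucc Hole) c))
| st_app_mu A c s :
    step (App (Mu A c) s) (Mu (cod A) (ssubst_c 0 (CApp Hole (shmu s)) c))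
| st_nrec_zero A r s : step (Nrec A r s Zero) r
| st_nrec_succ A r s n :
    step (Nrec A r s (Succ (num n))) (App (App s (num n)) (Nrec A r s (num n)))
| st_nrec_mu A r s B c :
    step (Nrec A r s (Mu B c))
         (Mu A (ssubst_c 0 (CNrec A (shmu r) (shmu s) Hole) c))
| st_lam A t t' : step t t' -> step (Lam A t) (Lam A t')
| st_appl t t' s : step t t' -> step (App t s) (App t' s)
| st_appr t s s' : step s s' -> step (App t s) (App t s')
| st_mu A c c' : step_c c c' -> step (Mu A c) (Mu A c')
| st_succ t t' : step t t' -> step (Succ t) (Succ t')
| st_nrec1 A r r' s t : step r r' -> step (Nrec A r s t) (Nrec A r' s t)
| st_nrec2 A r s s' t : step s s' -> step (Nrec A r s t) (Nrec A r s' t)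
| st_nrec3 A r s t t' : step t t' -> step (Nrec A r s t) (Nrec A r s t')
with step_c : cmd -> cmd -> Prop :=
| stc_named a t t' : step t t' -> step_c (Named a t) (Named a t').

Inductive SN (t : term) : Prop :=
| SN_intro : (forall t', step t t' -> SN t') -> SN t.

(* Because an nrec-term is neither an abstraction, a mu-term nor
   a numeral, the hole of E can never take part in a redex together with E:
   every reduct of E[u] either reduces E (leaving u in place) or reduces u
   inside E (lemma [fill_step_inv]).  With this decomposition both parts are
   proved by well-founded induction on the given SN hypotheses:
   - E[nrec r s 0]: induction on SN s and SN E[r]; the contraction gives E[r].
   - E[nrec r s (S n)]: induction on SN E[s n (nrec r s n)], taken along the
     transitive closure of reduction, because a step of s inside the redex
     corresponds to two steps of the contractum (both copies of s move);
     the contraction gives exactly the term assumed to be SN.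
   Numerals are normal forms, which rules out reductions of the argument. *)
From Stdlib Require Import Relations Wellfounded.Transitive_Closure.

Inductive step_ctx : ctx -> ctx -> Prop :=
| sc_app1 E E' t : step_ctx E E' -> step_ctx (CApp E t) (CApp E' t)
| sc_app2 E t t' : step t t' -> step_ctx (CApp E t) (CApp E t')
| sc_succ E E' : step_ctx E E' -> step_ctx (CSucc E) (CSucc E')
| sc_nrec1 A r r' s E : step r r' -> step_ctx (CNrec A r s E) (CNrec A r' s E)
| sc_nrec2 A r s s' E : step s s' -> step_ctx (CNrec A r s E) (CNrec A r s' E)
| sc_nrec3 A r s E E' : step_ctx E E' -> step_ctx (CNrec A r s E) (CNrec A r s E').

Lemma fill_step_ctx E E' u : step_ctx E E' -> step (fill E u) (fill E' u).
Proof. induction 1; simpl; constructor; auto. Qed.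

Lemma fill_step E u u' : step u u' -> step (fill E u) (fill E u').
Proof. induction E; simpl; intros; try constructor; auto. Qed.

(* Terms whose head can never form a redex with a surrounding context:
   variables, applications and recursors. *)
Definition inert (u : term) : Prop :=
  match u with
  | Var _ | App _ _ | Nrec _ _ _ _ => True
  | _ => False
  end.

Lemma fill_inert_not_num E u n : inert u -> fill E u <> num n.
Proof.
  intros Hu. revert n; induction E; intros [|n]; simpl; try discriminate;
    try (destruct u; simpl in Hu; easy).
  intros Heq; injection Heq; apply IHE.
Qed.

Lemma fill_inert_not_lam E u A t : inert u -> fill E u <> Lam A t.
Proof. intros Hu; destruct E; simpl; try discriminate; destruct u; easy. Qed.

Lemma fill_inert_not_mu E u A c : inert u -> fill E u <> Mu A c.
Proof. intros Hu; destruct E; simpl; try discriminate; destruct u; easy. Qed.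

Lemma fill_step_inv E u t' : inert u -> step (fill E u) t' ->
  (exists E', step_ctx E E' /\ t' = fill E' u) \/
  (exists u', step u u' /\ t' = fill E u').
Proof.
  intros Hu. revert t'. induction E as [|E IHE t|E IHE|A a b E IHE];
    simpl; intros t' Hstep.
  - right; eauto.
  - inversion Hstep; subst.
    + exfalso; eapply fill_inert_not_lam; eauto.
    + exfalso; eapply fill_inert_not_mu; eauto.
    + match goal with Hin : step (fill E u) _ |- _ =>
        destruct (IHE _ Hin) as [[E' [HE ->]]|[u' [Hu' ->]]]
      end.
      * left; exists (CApp E' t); split; [constructor; auto | reflexivity].
      * right; eauto.
    + left; exists (CApp E s'); split; [constructor; auto | reflexivity].
  - inversion Hstep; subst.
    + exfalso; eapply fill_inert_not_mu; eauto.
    + match goal with Hin : step (fill E u) _ |- _ =>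
        destruct (IHE _ Hin) as [[E' [HE ->]]|[u' [Hu' ->]]]
      end.
      * left; exists (CSucc E'); split; [constructor; auto | reflexivity].
      * right; eauto.
  - inversion Hstep; subst.
    + exfalso; apply (fill_inert_not_num E u 0); auto.
    + exfalso; apply (fill_inert_not_num E u (S n)); auto.
    + exfalso; eapply fill_inert_not_mu; eauto.
    + left; eexists; split; [apply sc_nrec1; eauto | reflexivity].
    + left; eexists; split; [apply sc_nrec2; eauto | reflexivity].
    + match goal with Hin : step (fill E u) _ |- _ =>
        destruct (IHE _ Hin) as [[E' [HE ->]]|[u' [Hu' ->]]]
      end.
      * left; eexists; split; [apply sc_nrec3; eauto | reflexivity].
      * right; eauto.
Qed.

Lemma num_normal n t : ~ step (num n) t.
Proof.
  revert t; induction n as [|n IHn]; simpl; intros t Hstep; inversion Hstep; subst.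
  - destruct n; discriminate.
  - eapply IHn; eauto.
Qed.

Lemma num_inj n m : num n = num m -> n = m.
Proof.
  revert m; induction n; intros [|m]; simpl; intros Heq; try discriminate; auto.
  injection Heq; auto.
Qed.

(* SN coincides with accessibility along the transitive closure of
   reduction; this gives an induction principle allowing several steps. *)
Definition step_plus_rev : relation term :=
  clos_trans term (fun t' t => step t t').

Lemma SN_Acc_plus t : SN t -> Acc step_plus_rev t.
Proof.
  intros Hsn; apply Acc_clos_trans.
  induction Hsn as [t _ IH]; constructor; auto.
Qed.

Lemma Acc_plus_SN t : Acc step_plus_rev t -> SN t.
Proof. induction 1 as [t _ IH]; constructor; intros; apply IH, t_step; auto. Qed.

Lemma SN_fill_nrec_zero rho s : SN s ->
  forall E r, SN (fill E r) -> SN (fill E (Nrec rho r s Zero)).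
Proof.
  induction 1 as [s _ IHs]. intros E r Hr.
  remember (fill E r) as t eqn:Ht. revert E r Ht.
  induction Hr as [t Hsn IHt]. intros E r ->.
  constructor; intros t' Hstep.
  destruct (fill_step_inv E (Nrec rho r s Zero) t' I Hstep)
    as [[E' [HE ->]]|[u' [Hu ->]]].
  - eapply IHt; [apply fill_step_ctx; eauto | reflexivity].
  - inversion Hu; subst.
    + constructor; exact Hsn.
    + eapply IHt; [apply fill_step; eauto | reflexivity].
    + apply IHs; auto; constructor; exact Hsn.
    + match goal with Hz : step Zero _ |- _ => destruct (num_normal 0 _ Hz) end.
Qed.

Lemma SN_fill_nrec_succ rho E r s n :
  SN (fill E (App (App s (num n)) (Nrec rho r s (num n)))) ->
  SN (fill E (Nrec rho r s (Succ (num n)))).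
Proof.
  intros Hsn. apply SN_Acc_plus in Hsn.
  remember (fill E (App (App s (num n)) (Nrec rho r s (num n)))) as t eqn:Ht.
  revert E r s Ht. induction Hsn as [t Hacc IH]. intros E r s ->.
  constructor; intros t' Hstep.
  destruct (fill_step_inv E (Nrec rho r s (Succ (num n))) t' I Hstep)
    as [[E' [HE ->]]|[u' [Hu ->]]].
  - eapply IH; [apply t_step, fill_step_ctx; eauto | reflexivity].
  - inversion Hu; subst.
    + match goal with Heq : num _ = num _ |- _ => apply num_inj in Heq; subst end.
      apply Acc_plus_SN; constructor; exact Hacc.
    + eapply IH; [| reflexivity].
      apply t_step, fill_step, st_appr, st_nrec1; auto.
    + (* both occurrences of s reduce: two steps of the contractum *)
      eapply IH; [| reflexivity].
      eapply t_trans; apply t_step, fill_step.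
      * apply st_appr, st_nrec2; eauto.
      * apply st_appl, st_appl; eauto.
    + match goal with Hz : step (Succ (num n)) _ |- _ =>
        destruct (num_normal (S n) _ Hz) end.
Qed.

Theorem mainTheorem19 :
  forall (E : ctx) (rho : ty) (r s : term) (n : nat),
    (SN (fill E r) -> SN s -> SN (fill E (Nrec rho r s Zero))) /\
    (SN (fill E (App (App s (num n)) (Nrec rho r s (num n)))) ->
     SN (fill E (Nrec rho r s (Succ (num n))))).
Proof.
  intros E rho r s n; split.
  - intros Hr Hs; apply SN_fill_nrec_zero; auto.
  - apply SN_fill_nrec_succ.
Qed.
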